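(* Let $A\in\mathbb{R}^{m\times n}$ with $m>n$ be a full-rank standardized matrix with no two distinct rows parallel, let $x\in\mathbb{R}^n$, and let $b=Ax$. Let $x_k$ denote the $k$-th iterate of the two-subspace Kaczmarz method applied to $(A,b)$ from a deterministic starting point $x_0$. Then for every $k\ge 0$, $$\mathbb{E}\|x-x_k\|_2^2\le\left(\left(1-\frac1R\right)^2-\frac{D}{R}\right)^k\|x-x_0\|_2^2,$$ where $D=\min\left\{\frac{\delta^2(1-\delta)}{1+\delta},\frac{\Delta^2(1-\Delta)}{1+\Delta}\right\}$.
   Context: $A\in\mathbb{R}^{m\times n}$ has rows $a_1,\dots,a_m$. It is called standardized if $\|a_i\|_2=1$ for all $i$. ''No two distinct rows parallel'' means $|\langle a_r,a_s\rangle|<1$ for all $r\ne s$. Two-subspace Kaczmarz method for $(A,b)$, $b\in\mathbb{R}^m$: start from $x_0\in\mathbb{R}^n$. For $k=1,2,\dots$, choose an ordered pair $(r,s)$ of distinct indices in $\{1,\dots,m\}$ uniformly at random among the $m^2-m$ such pairs, independently of all previous choices. Then set $\mu_k=\langle a_r,a_s\rangle$, $y_k=x_{k-1}+(b_s-\langle x_{k-1},a_s\rangle)a_s$, $v_k=\frac{a_r-\mu_k a_s}{\sqrt{1-\mu_k^2}}$, $\beta_k=\frac{b_r-b_s\mu_k}{\sqrt{1-\mu_k^2}}$, and $x_k=y_k+(\beta_k-\langle y_k,v_k\rangle)v_k$. Coherence parameters: $\Delta=\max_{j\ne k}|\langle a_j,a_k\rangle|$ and $\delta=\min_{j\ne k}|\langle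 a_j,a_k\rangle|$. Scaled condition number: $R=\|A\|_F^2\|A^{-1}\|^2$, where $\|A^{-1}\|=\inf\{M: M\|Az\|_2\ge\|z\|_2\ \text{for all } z\}$, i.e. the reciprocal of the smallest singular value of $A$. *)

From Stdlib Require Import Reals Lra Lia.
Open Scope R_scope.

(* Vectors in R^n are functions nat -> R (only indices < n matter);
   an m x n matrix is a function nat -> nat -> R (entries A i j, i < m, j < n). *)

Fixpoint sumR (n : nat) (f : nat -> R) : R :=
  match n with
  | O => 0
  | S k => sumR k f + f k
  end.

Definition dot (n : nat) (u v : nat -> R) : R := sumR n (fun i => u i * v i).
Definition vnorm (n : nat) (u : nat -> R) : R := sqrt (dot n u u).

Definition row (A : nat -> nat -> R) (i : nat) : nat -> R := fun j => A i j.

Definition matvec (n : nat) (A : nat -> nat -> R) (z : nat -> R) : nat -> R :=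
  fun i => sumR n (fun j => A i j * z j).

Definition vsub (u v : nat -> R) : nat -> R := fun i => u i - v i.

Definition standardized (m n : nat) (A : nat -> nat -> R) : Prop :=
  forall i, (i < m)%nat -> vnorm n (row A i) = 1.

Definition no_two_rows_parallel (m n : nat) (A : nat -> nat -> R) : Prop :=
  forall r s, (r < m)%nat -> (s < m)%nat -> r <> s ->
    Rabs (dot n (row A r) (row A s)) < 1.

(* full rank for m > n: rank n, i.e. the n columns are linearly independent *)
Definition full_column_rank (m n : nat) (A : nat -> nat -> R) : Prop :=
  forall z : nat -> R,
    (forall i, (i < m)%nat -> matvec n A z i = 0) ->
    forall j, (j < n)%nat -> z j = 0.

Definition frob_sq (m n : nat) (A : nat -> nat -> R) : R :=
  sumR m (fun i => sumR n (fun j => (A i j) ^ 2)).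

(* Ainv is ||A^{-1}|| = inf { M : M ||Az|| >= ||z|| for all z } *)
Definition inv_norm_set (m n : nat) (A : nat -> nat -> R) (M : R) : Prop :=
  forall z : nat -> R, M * vnorm m (matvec n A z) >= vnorm n z.

Definition is_inf (P : R -> Prop) (a : R) : Prop :=
  (forall M, P M -> a <= M) /\ (forall b, (forall M, P M -> b <= M) -> b <= a).

Definition is_max_coherence (m n : nat) (A : nat -> nat -> R) (D : R) : Prop :=
  (forall j k, (j < m)%nat -> (k < m)%nat -> j <> k ->
      Rabs (dot n (row A j) (row A k)) <= D) /\
  (exists j k, (j < m)%nat /\ (k < m)%nat /\ j <> k /\
      Rabs (dot n (row A j) (row A k)) = D).

Definition is_min_coherence (m n : nat) (A : nat -> nat -> R) (d : R) : Prop :=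
  (forall j k, (j < m)%nat -> (k < m)%nat -> j <> k ->
      d <= Rabs (dot n (row A j) (row A k))) /\
  (exists j k, (j < m)%nat /\ (k < m)%nat /\ j <> k /\
      Rabs (dot n (row A j) (row A k)) = d).

Definition tsk_step (n : nat) (A : nat -> nat -> R) (b : nat -> R)
    (xprev : nat -> R) (r s : nat) : nat -> R :=
  let ar := row A r in
  let as_ := row A s in
  let mu := dot n ar as_ in
  let y := fun i => xprev i + (b s - dot n xprev as_) * as_ i in
  let v := fun i => (ar i - mu * as_ i) / sqrt (1 - mu ^ 2) in
  let beta := (b r - b s * mu) / sqrt (1 - mu ^ 2) in
  fun i => y i + (beta - dot n y v) * v i.

(* Expected value of ||x - x_k||_2^2, where x_k is the k-th iterate started
   from the deterministic x0, and the pairs (r,s), r <> s, are drawn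
   independently and uniformly among the m^2 - m ordered pairs.  Computed by
   conditioning on the first pair (exact finite average over all sequences). *)
Fixpoint expected_err (m n : nat) (A : nat -> nat -> R) (b x : nat -> R)
    (k : nat) (x0 : nat -> R) : R :=
  match k with
  | O => (vnorm n (vsub x x0)) ^ 2
  | S k' =>
      / (INR m * INR m - INR m) *
      sumR m (fun r => sumR m (fun s =>
        if Nat.eq_dec r s then 0
        else expected_err m n A b x k' (tsk_step n A b x0 r s)))
  end.

From Stdlib Require Import Reals Lra Lia Psatz.
Open Scope R_scope.

(* Write e = x - x0 and alpha_i = <e, a_i>.  For a pair (r, s) with
   mu = <a_r, a_s>, one step projects e away from a_s and from the unit vector
   v = (a_r - mu a_s) / sqrt(1 - mu^2), so the new error has squared norm
     |e|^2 - alpha_s^2 - (alpha_r - mu alpha_s)^2 / (1 - mu^2)    (tsk_step_error).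
   Splitting 1/(1 - mu^2) = 1 + mu^2/(1 - mu^2) and summing over the m^2 - m
   ordered pairs: the first part is the one-subspace error, bounded through
   the lower frame bound lam |z|^2 <= |A z|^2, lam = 1/||A^{-1}||^2; the second
   part, paired over (r, s) and (s, r), gains at least D (alpha_r^2 + alpha_s^2)
   because D <= h(|mu|) with h(t) = t^2 (1 - t)/(1 + t) unimodal.  This gives
   the average one-step contraction by rho = (1 - 1/R)^2 - D/R
   (one_step_contraction), which iterates to rho^k through the recursive
   definition of the expected error (expected_err_geometric). *)

Lemma sumR_ext n f g : (forall i, (i < n)%nat -> f i = g i) -> sumR n f = sumR n g.
Proof.
  induction n as [|n IH]; intros Hfg; simpl; [reflexivity|].
  rewrite IH by (intros; apply Hfg; lia). rewrite Hfg by lia. reflexivity.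
Qed.

Lemma sumR_le n f g : (forall i, (i < n)%nat -> f i <= g i) -> sumR n f <= sumR n g.
Proof.
  induction n as [|n IH]; intros Hfg; simpl; [lra|].
  assert (sumR n f <= sumR n g) by (apply IH; intros; apply Hfg; lia).
  assert (f n <= g n) by (apply Hfg; lia). lra.
Qed.

Lemma sumR_plus n f g : sumR n (fun i => f i + g i) = sumR n f + sumR n g.
Proof. induction n; simpl; [ring | rewrite IHn; ring]. Qed.

Lemma sumR_minus n f g : sumR n (fun i => f i - g i) = sumR n f - sumR n g.
Proof. induction n; simpl; [ring | rewrite IHn; ring]. Qed.

Lemma sumR_scal n c f : sumR n (fun i => c * f i) = c * sumR n f.
Proof. induction n; simpl; [ring | rewrite IHn; ring]. Qed.

Lemma sumR_const n c : sumR n (fun _ => c) = INR n * c.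
Proof. induction n; [simpl; ring | rewrite S_INR; simpl; rewrite IHn; ring]. Qed.

Lemma sumR_nonneg n f : (forall i, (i < n)%nat -> 0 <= f i) -> 0 <= sumR n f.
Proof.
  intros Hf. rewrite <- (Rmult_0_r (INR n)), <- sumR_const. now apply sumR_le.
Qed.

Lemma sumR_swap m k f :
  sumR m (fun r => sumR k (fun s => f r s)) = sumR k (fun s => sumR m (fun r => f r s)).
Proof.
  induction m; simpl; [rewrite sumR_const; ring | rewrite IHm, <- sumR_plus; reflexivity].
Qed.

Lemma sumR_skip m s f : (s < m)%nat ->
  sumR m (fun r => if Nat.eq_dec r s then 0 else f r) = sumR m f - f s.
Proof.
  induction m as [|m IH]; intros Hs; [lia|]. simpl. destruct (Nat.eq_dec m s) as [->|Hms].
  - rewrite (sumR_ext _ _ f); [ring|].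
    intros i Hi. destruct (Nat.eq_dec i s); [lia | reflexivity].
  - rewrite IH by lia. ring.
Qed.

Lemma sumR_sq_eq0 n g : sumR n (fun i => g i * g i) = 0 -> forall i, (i < n)%nat -> g i = 0.
Proof.
  induction n as [|n IH]; simpl; intros Hsum i Hi; [lia|].
  assert (0 <= sumR n (fun i => g i * g i)) by (apply sumR_nonneg; intros; nra).
  destruct (Nat.eq_dec i n) as [->|Hin]; [nra|].
  apply IH; [nra | lia].
Qed.

(* The sum over ordered pairs (r, s) of distinct indices in [0, m),
   i.e. m^2 - m times the average over one step of the method. *)
Definition pairsum (m : nat) (f : nat -> nat -> R) : R :=
  sumR m (fun r => sumR m (fun s => if Nat.eq_dec r s then 0 else f r s)).

Lemma pairsum_le m f g :
  (forall r s, (r < m)%nat -> (s < m)%nat -> r <> s -> f r s <= g r s) ->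
  pairsum m f <= pairsum m g.
Proof.
  intros Hfg. apply sumR_le. intros r Hr. apply sumR_le. intros s Hs.
  destruct (Nat.eq_dec r s); [lra | auto].
Qed.

Lemma pairsum_ext m f g :
  (forall r s, (r < m)%nat -> (s < m)%nat -> r <> s -> f r s = g r s) ->
  pairsum m f = pairsum m g.
Proof.
  intros Hfg. apply Rle_antisym; apply pairsum_le; intros; rewrite Hfg; auto; lra.
Qed.

Lemma pairsum_scal m c f : pairsum m (fun r s => c * f r s) = c * pairsum m f.
Proof.
  unfold pairsum. rewrite <- sumR_scal. apply sumR_ext. intros r _.
  rewrite <- sumR_scal. apply sumR_ext. intros s _. destruct (Nat.eq_dec r s); ring.
Qed.

Lemma pairsum_plus m f g : pairsum m (fun r s => f r s + g r s) = pairsum m f + pairsum m g.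
Proof.
  unfold pairsum. rewrite <- sumR_plus. apply sumR_ext. intros r _.
  rewrite <- sumR_plus. apply sumR_ext. intros s _. destruct (Nat.eq_dec r s); ring.
Qed.

Lemma pairsum_minus m f g : pairsum m (fun r s => f r s - g r s) = pairsum m f - pairsum m g.
Proof.
  unfold pairsum. rewrite <- sumR_minus. apply sumR_ext. intros r _.
  rewrite <- sumR_minus. apply sumR_ext. intros s _. destruct (Nat.eq_dec r s); ring.
Qed.

Lemma pairsum_by_column m f :
  pairsum m f = sumR m (fun s => sumR m (fun r => f r s) - f s s).
Proof.
  unfold pairsum. rewrite sumR_swap. apply sumR_ext. intros s Hs.
  rewrite <- (sumR_skip m s (fun r => f r s)) by exact Hs. apply sumR_ext. intros r _.
  destruct (Nat.eq_dec r s), (Nat.eq_dec s r); subst; easy.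
Qed.

Lemma pairsum_transpose m f : pairsum m f = pairsum m (fun r s => f s r).
Proof.
  unfold pairsum. rewrite sumR_swap. apply sumR_ext. intros r _. apply sumR_ext. intros s _.
  destruct (Nat.eq_dec s r), (Nat.eq_dec r s); subst; easy.
Qed.

Lemma pairsum_marginals m g :
  pairsum m (fun r s => g r + g s) = 2 * (INR m - 1) * sumR m g.
Proof.
  rewrite pairsum_by_column.
  rewrite (sumR_ext _ _ (fun s => sumR m g + (INR m - 2) * g s)).
  - rewrite sumR_plus, sumR_const, sumR_scal. ring.
  - intros s _. rewrite sumR_plus, sumR_const. ring.
Qed.

Lemma pairsum_nonneg m f :
  (forall r s, (r < m)%nat -> (s < m)%nat -> r <> s -> 0 <= f r s) -> 0 <= pairsum m f.
Proof.
  intros Hf. apply sumR_nonneg. intros r Hr. apply sumR_nonneg. intros s Hs.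
  destruct (Nat.eq_dec r s); [lra | auto].
Qed.

Lemma dot_ext n u u' v v' : (forall i, (i < n)%nat -> u i = u' i) ->
  (forall i, (i < n)%nat -> v i = v' i) -> dot n u v = dot n u' v'.
Proof. intros Hu Hv. apply sumR_ext. intros i Hi. now rewrite Hu, Hv. Qed.

Lemma dot_comm n u v : dot n u v = dot n v u.
Proof. apply sumR_ext. intros; ring. Qed.

Lemma dot_self_nonneg n u : 0 <= dot n u u.
Proof. apply sumR_nonneg. intros; nra. Qed.

Lemma vnorm_sq n u : vnorm n u ^ 2 = dot n u u.
Proof. apply pow2_sqrt, dot_self_nonneg. Qed.

Lemma dot_vsub_l n u w z : dot n (vsub u w) z = dot n u z - dot n w z.
Proof. unfold dot, vsub. induction n; simpl; [ring | rewrite IHn; ring]. Qed.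

Lemma dot_sub_scal_l n u w c z :
  dot n (fun i => u i - c * w i) z = dot n u z - c * dot n w z.
Proof. unfold dot. induction n; simpl; [ring | rewrite IHn; ring]. Qed.

Lemma dot_sub_scal_r n z u w c :
  dot n z (fun i => u i - c * w i) = dot n z u - c * dot n z w.
Proof. rewrite dot_comm, dot_sub_scal_l, (dot_comm n u), (dot_comm n w). reflexivity. Qed.

Lemma dot_div_r n z u c : dot n z (fun i => u i / c) = dot n z u / c.
Proof. unfold dot, Rdiv. induction n; simpl; [ring | rewrite IHn; ring]. Qed.

Lemma norm_sub_scal n u w c :
  dot n (fun i => u i - c * w i) (fun i => u i - c * w i)
  = dot n u u - 2 * c * dot n u w + c ^ 2 * dot n w w.
Proof.
  rewrite dot_sub_scal_l, !dot_sub_scal_r, (dot_comm n w u). ring.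
Qed.

Lemma norm_sub_proj n u a : dot n a a = 1 ->
  dot n (fun i => u i - dot n u a * a i) (fun i => u i - dot n u a * a i)
  = dot n u u - dot n u a ^ 2.
Proof. intros Ha. rewrite norm_sub_scal, Ha. ring. Qed.

Lemma matvec_dot n A z i : matvec n A z i = dot n (row A i) z.
Proof. reflexivity. Qed.

(* One step of the method, with pair (r, s) and exact data b = A x, projects the
   error e = x - x0 away from a_s and from the unit vector v of span{a_r, a_s}
   orthogonal to a_s; hence the error loses exactly these two components. *)
Lemma tsk_step_error n A (b x x0 : nat -> R) r s :
  b r = matvec n A x r -> b s = matvec n A x s ->
  dot n (row A r) (row A r) = 1 -> dot n (row A s) (row A s) = 1 ->
  Rabs (dot n (row A r) (row A s)) < 1 ->
  let e := vsub x x0 in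
  let mu := dot n (row A r) (row A s) in
  dot n (vsub x (tsk_step n A b x0 r s)) (vsub x (tsk_step n A b x0 r s))
  = dot n e e - dot n e (row A s) ^ 2
    - (dot n e (row A r) - mu * dot n e (row A s)) ^ 2 / (1 - mu ^ 2).
Proof.
  intros Hbr Hbs Har Has Hmu e mu.
  set (a_s := row A s) in *. set (a_r := row A r) in *.
  assert (Hmu2 : 0 < 1 - mu ^ 2) by (unfold mu; destruct (Rabs_def2 _ _ Hmu); nra).
  set (sig := sqrt (1 - mu ^ 2)).
  assert (Hsig2 : sig * sig = 1 - mu ^ 2) by (apply sqrt_sqrt; lra).
  assert (Hsig : sig <> 0) by (intros H0; rewrite H0 in Hsig2; lra).
  set (v := fun i => (a_r i - mu * a_s i) / sig).
  assert (Hbr' : b r = dot n x a_r) by (rewrite Hbr, matvec_dot; apply dot_comm).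
  assert (Hbs' : b s = dot n x a_s) by (rewrite Hbs, matvec_dot; apply dot_comm).
  assert (Hdotv : forall z, dot n z v = (dot n z a_r - mu * dot n z a_s) / sig).
  { intros z. unfold v. now rewrite dot_div_r, dot_sub_scal_r. }
  assert (Hav : dot n a_s v = 0).
  { rewrite Hdotv, Has, (dot_comm n a_s a_r). fold mu. unfold Rdiv; ring. }
  assert (Hvv : dot n v v = 1).
  { rewrite Hdotv, (dot_comm n v a_r), (dot_comm n v a_s), Hav, Hdotv, Har.
    fold mu. transitivity ((1 - mu * mu) / (sig * sig)); [field; exact Hsig|].
    rewrite Hsig2. field. lra. }
  assert (Hkappa : b s - dot n x0 a_s = dot n e a_s) by (unfold e; rewrite dot_vsub_l, Hbs'; ring).
  assert (Hbeta : (b r - b s * mu) / sig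
                  - dot n (fun i => x0 i + (b s - dot n x0 a_s) * a_s i) v = dot n e v).
  { rewrite Hkappa, (dot_ext n _ (fun i => x0 i - (- dot n e a_s) * a_s i) v v)
      by (intros; ring).
    rewrite dot_sub_scal_l, Hav, !Hdotv. unfold e. rewrite !dot_vsub_l, Hbr', Hbs'.
    field. exact Hsig. }
  rewrite (dot_ext n _ (fun i => (e i - dot n e a_s * a_s i) - dot n e v * v i)
                 _ (fun i => (e i - dot n e a_s * a_s i) - dot n e v * v i)).
  2, 3: intros i _; unfold tsk_step; cbv zeta;
        change (row A s) with a_s; change (row A r) with a_r;
        change (dot n a_r a_s) with mu; change (sqrt (1 - mu ^ 2)) with sig;
        change (fun j => (a_r j - mu * a_s j) / sig) with v;
        rewrite Hbeta, Hkappa; unfold e, v, vsub; ring.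
  rewrite norm_sub_scal, norm_sub_proj, Hvv, dot_sub_scal_l, Hav by exact Has.
  rewrite Hdotv, <- Hsig2. field. exact Hsig.
Qed.

Definition gain (t : R) : R := t ^ 2 * (1 - t) / (1 + t).

Lemma gain_nonneg t : 0 <= t < 1 -> 0 <= gain t.
Proof.
  intros Ht. unfold gain, Rdiv. apply Rmult_le_pos.
  - apply Rmult_le_pos; [apply pow2_ge_0 | lra].
  - left. apply Rinv_0_lt_compat. lra.
Qed.

(* h increases and then decreases on [0, 1), so on [d, D] it is bounded below
   by its values at the endpoints. *)
Lemma gain_min_endpoints d t Dl : 0 <= d -> d <= t -> t <= Dl -> Dl < 1 ->
  Rmin (gain d) (gain Dl) <= gain t.
Proof.
  intros Hd Hdt HtD HD. unfold gain.
  assert (Hdiff : forall p q, p ^ 2 * (1 - p) * (1 + q) - q ^ 2 * (1 - q) * (1 + p)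
                  = (p - q) * (p * (1 - p - p * q) + q * (1 - q - p * q))) by (intros; ring).
  destruct (Rle_dec (t + t ^ 2) 1).
  - eapply Rle_trans; [apply Rmin_l|].
    apply Rmult_le_reg_r with ((1 + d) * (1 + t)); [nra|].
    unfold Rdiv. field_simplify; try lra.
    assert (0 <= (t - d) * (t * (1 - t - t * d) + d * (1 - d - t * d))).
    { apply Rmult_le_pos; [lra|]. assert (0 <= 1 - t - t * d) by nra.
      assert (0 <= 1 - d - t * d) by nra. nra. }
    pose proof (Hdiff t d). nra.
  - eapply Rle_trans; [apply Rmin_r|].
    apply Rmult_le_reg_r with ((1 + Dl) * (1 + t)); [nra|].
    unfold Rdiv. field_simplify; try lra.
    assert (0 <= (Dl - t) * - (t * (1 - t - t * Dl) + Dl * (1 - Dl - t * Dl))).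
    { apply Rmult_le_pos; [lra|]. assert (1 - t - t * Dl <= 0) by nra.
      assert (1 - Dl - t * Dl <= 0) by nra. nra. }
    pose proof (Hdiff t Dl). nra.
Qed.

Lemma residuals_lower a b mu :
  (1 - Rabs mu) ^ 2 * (a ^ 2 + b ^ 2) <= (a - mu * b) ^ 2 + (b - mu * a) ^ 2.
Proof.
  assert (Hcross : 2 * (mu * a * b) <= Rabs mu * (a ^ 2 + b ^ 2)).
  { destruct (Rcase_abs mu) as [Hneg | Hpos].
    - rewrite Rabs_left by exact Hneg. pose proof (pow2_ge_0 (a + b)). nra.
    - rewrite Rabs_right by exact Hpos. pose proof (pow2_ge_0 (a - b)). nra. }
  assert (Hsq : mu ^ 2 = Rabs mu ^ 2) by (rewrite pow2_abs; reflexivity).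
  nra.
Qed.

Lemma pair_gain a b mu D : Rabs mu < 1 -> D <= gain (Rabs mu) ->
  D * (a ^ 2 + b ^ 2) <=
  mu ^ 2 * (a - mu * b) ^ 2 / (1 - mu ^ 2) + mu ^ 2 * (b - mu * a) ^ 2 / (1 - mu ^ 2).
Proof.
  intros Hmu HD. set (t := Rabs mu) in *.
  assert (Ht : 0 <= t) by apply Rabs_pos.
  assert (Hsq : mu ^ 2 = t ^ 2) by (unfold t; rewrite pow2_abs; reflexivity).
  assert (Hgain : gain t = t ^ 2 / (1 - t ^ 2) * (1 - t) ^ 2) by (unfold gain; field; repeat split; nra).
  assert (Hc : 0 <= t ^ 2 / (1 - t ^ 2)).
  { unfold Rdiv. apply Rmult_le_pos; [apply pow2_ge_0 | left; apply Rinv_0_lt_compat; nra]. }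
  pose proof (residuals_lower a b mu) as Hres. fold t in Hres.
  replace (mu ^ 2 * (a - mu * b) ^ 2 / (1 - mu ^ 2) + mu ^ 2 * (b - mu * a) ^ 2 / (1 - mu ^ 2))
    with (t ^ 2 / (1 - t ^ 2) * ((a - mu * b) ^ 2 + (b - mu * a) ^ 2))
    by (rewrite Hsq; field; nra).
  assert (0 <= a ^ 2 + b ^ 2) by nra.
  apply Rle_trans with (gain t * (a ^ 2 + b ^ 2)); [now apply Rmult_le_compat_r|].
  rewrite Hgain, Rmult_assoc. now apply Rmult_le_compat_l.
Qed.

(* The purely numerical last step: with M = m >= 2 rows, u = lambda_min,
   E = |e|^2 and u E <= S <= M E. *)
Lemma rate_algebra M u E S : 2 <= M -> 0 < u -> 0 <= E -> u * E <= S -> 0 <= M * E - S ->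
  (M - 1 - u) * (M * E - S) <= (M * M - M) * (1 - u / M) ^ 2 * E.
Proof.
  intros HM Hu HE HS HS2.
  replace ((M * M - M) * (1 - u / M) ^ 2 * E) with ((M - 1) * (M - u) ^ 2 / M * E)
    by (field; lra).
  assert (Hq : 0 <= (M - 1) * (M - u) ^ 2 / M).
  { unfold Rdiv. apply Rmult_le_pos; [|left; apply Rinv_0_lt_compat; lra].
    apply Rmult_le_pos; [lra | apply pow2_ge_0]. }
  destruct (Rle_dec 0 (M - 1 - u)); [|nra].
  assert (Hmid : (M - 1) * (M - u) ^ 2 / M - (M - 1 - u) * (M - u) = (M - u) * u / M)
    by (field; lra).
  assert (0 <= (M - u) * u / M).
  { unfold Rdiv. apply Rmult_le_pos; [nra | left; apply Rinv_0_lt_compat; lra]. }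
  assert ((M - 1 - u) * (M * E - S) <= (M - 1 - u) * ((M - u) * E)) by nra.
  nra.
Qed.

Section OneStepContraction.

Variables (m n : nat) (A : nat -> nat -> R) (b x : nat -> R) (lam D : R).
Hypothesis Hm : (2 <= m)%nat.
Hypothesis Hb : forall i, (i < m)%nat -> b i = matvec n A x i.
Hypothesis Hunit : forall i, (i < m)%nat -> dot n (row A i) (row A i) = 1.
Hypothesis Hpar : no_two_rows_parallel m n A.
Hypothesis Hlam : 0 < lam.
Hypothesis Hframe : forall z, lam * dot n z z <= sumR m (fun i => dot n (row A i) z ^ 2).
Hypothesis HD0 : 0 <= D.
Hypothesis HDgain : forall r s, (r < m)%nat -> (s < m)%nat -> r <> s ->
  D <= gain (Rabs (dot n (row A r) (row A s))).

Let mu r s := dot n (row A r) (row A s).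
Let alpha e i := dot n e (row A i).

(* The lower frame bound applied to e - <e, a_s> a_s: the residuals of the
   single projection onto a_s still see a fraction lam of the new error. *)
Lemma frame_after_projection e s : (s < m)%nat ->
  lam * (dot n e e - alpha e s ^ 2) <= sumR m (fun r => (alpha e r - mu r s * alpha e s) ^ 2).
Proof.
  intros Hs. unfold alpha.
  rewrite <- (norm_sub_proj n e (row A s)) by now apply Hunit.
  eapply Rle_trans; [apply Hframe|]. right. apply sumR_ext. intros r _.
  rewrite dot_sub_scal_r, (dot_comm n (row A r) e). unfold mu. ring.
Qed.

(* The part of the error common to one-subspace Kaczmarz, summed over pairs. *)
Lemma one_subspace_part e :
  let E := dot n e e in
  let S := sumR m (fun i => alpha e i ^ 2) in
  pairsum m (fun r s => E - alpha e s ^ 2 - (alpha e r - mu r s * alpha e s) ^ 2)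
  <= (INR m - 1 - lam) * (INR m * E - S).
Proof.
  intros E S. rewrite pairsum_by_column.
  unfold S. rewrite <- (Rmult_1_r (INR m)) at 2.
  rewrite Rmult_assoc, <- sumR_const, <- sumR_minus, <- sumR_scal.
  apply sumR_le. intros s Hs.
  assert (Hss : mu s s = 1) by now apply Hunit.
  pose proof (frame_after_projection e s Hs) as Hfr.
  rewrite !sumR_minus, !sumR_const, Hss. fold E in Hfr |- *. nra.
Qed.

(* The extra gain of the second projection, paired over (r, s) and (s, r). *)
Lemma coherence_part e :
  let S := sumR m (fun i => alpha e i ^ 2) in
  (INR m - 1) * D * S
  <= pairsum m (fun r s => mu r s ^ 2 * (alpha e r - mu r s * alpha e s) ^ 2 / (1 - mu r s ^ 2)).
Proof.
  intros S. set (T := fun r s => mu r s ^ 2 * (alpha e r - mu r s * alpha e s) ^ 2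
                                  / (1 - mu r s ^ 2)).
  apply Rmult_le_reg_l with 2; [lra|].
  replace (2 * pairsum m T) with (pairsum m (fun r s => T r s + T s r))
    by (rewrite pairsum_plus, <- (pairsum_transpose m T); ring).
  replace (2 * ((INR m - 1) * D * S))
    with (pairsum m (fun r s => D * alpha e r ^ 2 + D * alpha e s ^ 2))
    by (rewrite (pairsum_marginals m (fun i => D * alpha e i ^ 2)), sumR_scal; unfold S; ring).
  apply pairsum_le. intros r s Hr Hs Hrs.
  unfold T. rewrite (dot_comm n (row A s) (row A r) : mu s r = mu r s), <- Rmult_plus_distr_l.
  apply pair_gain; [apply Hpar | apply HDgain]; auto.
Qed.

Lemma one_step_contraction x0 :
  pairsum m (fun r s => vnorm n (vsub x (tsk_step n A b x0 r s)) ^ 2)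
  <= (INR m * INR m - INR m) * ((1 - lam / INR m) ^ 2 - D * lam / INR m)
     * vnorm n (vsub x x0) ^ 2.
Proof.
  set (e := vsub x x0). set (E := dot n e e). set (S := sumR m (fun i => alpha e i ^ 2)).
  assert (HM : 2 <= INR m) by (apply (le_INR 2); exact Hm).
  rewrite vnorm_sq. fold E.
  (* split the error of each step into the one-subspace part and the gain *)
  rewrite (pairsum_ext m _ (fun r s =>
      (E - alpha e s ^ 2 - (alpha e r - mu r s * alpha e s) ^ 2)
      - mu r s ^ 2 * (alpha e r - mu r s * alpha e s) ^ 2 / (1 - mu r s ^ 2))).
  2:{ intros r s Hr Hs Hrs. rewrite vnorm_sq, tsk_step_error; auto.
      assert (0 < 1 - mu r s ^ 2) by (destruct (Rabs_def2 _ _ (Hpar r s Hr Hs Hrs)); unfold mu; nra).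
      fold e E. unfold alpha, mu. field. unfold mu in *. lra. }
  rewrite pairsum_minus.
  pose proof (one_subspace_part e) as H1. pose proof (coherence_part e) as H2.
  cbv zeta in H1, H2. fold E S in H1, H2.
  assert (HSE : lam * E <= S).
  { unfold S. rewrite (sumR_ext _ _ (fun i => dot n (row A i) e ^ 2))
      by (intros; unfold alpha; now rewrite dot_comm). apply Hframe. }
  assert (HS2 : 0 <= INR m * E - S).
  { unfold S. rewrite <- sumR_const, <- sumR_minus. apply sumR_nonneg. intros s Hs.
    unfold E, alpha. rewrite <- norm_sub_proj by now apply Hunit. apply dot_self_nonneg. }
  pose proof (rate_algebra (INR m) lam E S HM Hlam (dot_self_nonneg n e) HSE HS2).
  assert ((INR m - 1) * D * (lam * E) <= (INR m - 1) * D * S)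
    by (apply Rmult_le_compat_l; [apply Rmult_le_pos|]; lra).
  replace ((INR m * INR m - INR m) * ((1 - lam / INR m) ^ 2 - D * lam / INR m) * E)
    with ((INR m * INR m - INR m) * (1 - lam / INR m) ^ 2 * E - (INR m - 1) * D * (lam * E))
    by (field; lra).
  lra.
Qed.

End OneStepContraction.

(* An average contraction factor rho is nonnegative, as soon as some error
   vector is nonzero: the averaged errors are themselves nonnegative. *)
Lemma rate_nonneg m n A (b x : nat -> R) rho z :
  (2 <= m)%nat -> 0 < dot n z z ->
  (forall y, pairsum m (fun r s => vnorm n (vsub x (tsk_step n A b y r s)) ^ 2)
             <= (INR m * INR m - INR m) * rho * vnorm n (vsub x y) ^ 2) ->
  0 <= rho.
Proof.
  intros Hm Hz Hstep.
  assert (HM : 2 <= INR m) by (apply (le_INR 2); exact Hm).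
  specialize (Hstep (fun j => x j - z j)).
  rewrite vnorm_sq, (dot_ext n _ z _ z) in Hstep by (intros; unfold vsub; ring).
  assert (0 <= pairsum m (fun r s => vnorm n (vsub x (tsk_step n A b (fun j => x j - z j) r s)) ^ 2))
    by (apply pairsum_nonneg; intros; apply pow2_ge_0).
  assert (0 < (INR m * INR m - INR m) * dot n z z) by (apply Rmult_lt_0_compat; nra).
  destruct (Rle_lt_dec 0 rho); nra.
Qed.

Lemma expected_err_geometric m n A (b x : nat -> R) rho :
  (2 <= m)%nat -> 0 <= rho ->
  (forall y, pairsum m (fun r s => vnorm n (vsub x (tsk_step n A b y r s)) ^ 2)
             <= (INR m * INR m - INR m) * rho * vnorm n (vsub x y) ^ 2) ->
  forall k x0, expected_err m n A b x k x0 <= rho ^ k * vnorm n (vsub x x0) ^ 2.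
Proof.
  intros Hm Hrho Hstep k. induction k as [|k IH]; intros x0; [simpl; lra|].
  assert (HM : 2 <= INR m) by (apply (le_INR 2); exact Hm).
  assert (Hpairs : 0 < / (INR m * INR m - INR m)) by (apply Rinv_0_lt_compat; nra).
  change (expected_err m n A b x (S k) x0) with
    (/ (INR m * INR m - INR m)
     * pairsum m (fun r s => expected_err m n A b x k (tsk_step n A b x0 r s))).
  apply Rle_trans with (/ (INR m * INR m - INR m)
     * (rho ^ k * pairsum m (fun r s => vnorm n (vsub x (tsk_step n A b x0 r s)) ^ 2))).
  - apply Rmult_le_compat_l; [lra|]. rewrite <- pairsum_scal.
    apply pairsum_le. intros; apply IH.
  - pose proof (pow_le rho k Hrho).
    apply Rle_trans with (/ (INR m * INR m - INR m)
       * (rho ^ k * ((INR m * INR m - INR m) * rho * vnorm n (vsub x x0) ^ 2))).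
    + apply Rmult_le_compat_l; [lra|]. now apply Rmult_le_compat_l.
    + right. simpl pow. field. nra.
Qed.

Lemma standardized_unit m n A : standardized m n A ->
  forall i, (i < m)%nat -> dot n (row A i) (row A i) = 1.
Proof.
  intros Hstd i Hi. rewrite <- vnorm_sq, (Hstd i Hi). ring.
Qed.

(* For a standardized matrix, R = m ||A^{-1}||^2. *)
Lemma frob_sq_standardized m n A : standardized m n A -> frob_sq m n A = INR m.
Proof.
  intros Hstd. unfold frob_sq. rewrite <- (Rmult_1_r (INR m)), <- sumR_const.
  apply sumR_ext. intros i Hi. rewrite <- (standardized_unit m n A Hstd i Hi).
  apply sumR_ext. intros; unfold row; ring.
Qed.

(* ||A^{-1}|| is the best constant in ||z|| <= ||A^{-1}|| ||A z||; hence
   ||z||^2 <= ||A^{-1}||^2 sum_i <a_i, z>^2 (for A z = 0 use full rank). *)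
Lemma inv_norm_bound m n A Ainv :
  full_column_rank m n A -> is_inf (inv_norm_set m n A) Ainv ->
  forall z, dot n z z <= Ainv ^ 2 * sumR m (fun i => dot n (row A i) z ^ 2).
Proof.
  intros Hrank [_ Hglb] z.
  set (Y := sumR m (fun i => dot n (row A i) z ^ 2)).
  assert (HY : Y = vnorm m (matvec n A z) ^ 2).
  { rewrite vnorm_sq. apply sumR_ext. intros; rewrite matvec_dot; ring. }
  assert (HY0 : 0 <= Y) by (rewrite HY; apply pow2_ge_0).
  destruct (Req_dec Y 0) as [Hzero | Hnz].
  - assert (Hz : forall j, (j < n)%nat -> z j = 0).
    { apply Hrank, sumR_sq_eq0. fold (dot m (matvec n A z) (matvec n A z)).
      rewrite <- vnorm_sq, <- HY. exact Hzero. }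
    rewrite (dot_ext n z (fun _ => 0) z (fun _ => 0)) by assumption.
    unfold dot. rewrite sumR_const, Hzero. lra.
  - assert (Hsq : 0 < vnorm m (matvec n A z)).
    { destruct (sqrt_pos (dot m (matvec n A z) (matvec n A z))) as [Hpos | H0]; [exact Hpos|].
      exfalso. apply Hnz. rewrite HY. unfold vnorm. rewrite <- H0. ring. }
    assert (Hratio : vnorm n z / vnorm m (matvec n A z) <= Ainv).
    { apply Hglb. intros M HM. specialize (HM z).
      apply Rmult_le_reg_r with (vnorm m (matvec n A z)); [exact Hsq|].
      unfold Rdiv. rewrite Rmult_assoc, Rinv_l by lra. lra. }
    assert (Hle : vnorm n z <= Ainv * vnorm m (matvec n A z)).
    { apply Rmult_le_reg_r with (/ vnorm m (matvec n A z)); [now apply Rinv_0_lt_compat|].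
      rewrite Rmult_assoc, Rinv_r, Rmult_1_r by lra. exact Hratio. }
    rewrite <- vnorm_sq, HY.
    replace (Ainv ^ 2 * vnorm m (matvec n A z) ^ 2) with ((Ainv * vnorm m (matvec n A z)) ^ 2)
      by ring.
    apply pow_incr. split; [apply sqrt_pos | exact Hle].
Qed.

(* The lower frame bound with lam = 1 / ||A^{-1}||^2 > 0 (positivity because
   the unit row a_0 is a nonzero vector). *)
Lemma lower_frame_bound m n A Ainv :
  (0 < m)%nat -> standardized m n A -> full_column_rank m n A ->
  is_inf (inv_norm_set m n A) Ainv ->
  0 < Ainv ^ 2 /\
  forall z, / Ainv ^ 2 * dot n z z <= sumR m (fun i => dot n (row A i) z ^ 2).
Proof.
  intros Hm Hstd Hrank Hinf.
  pose proof (inv_norm_bound m n A Ainv Hrank Hinf) as Hbound.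
  assert (HA : 0 < Ainv ^ 2).
  { specialize (Hbound (row A 0)). rewrite (standardized_unit m n A Hstd 0%nat Hm) in Hbound.
    assert (0 <= sumR m (fun i => dot n (row A i) (row A 0) ^ 2))
      by (apply sumR_nonneg; intros; apply pow2_ge_0).
    destruct (pow2_ge_0 Ainv) as [Hpos | H0]; [exact Hpos|]. rewrite <- H0 in Hbound. lra. }
  split; [exact HA|]. intros z.
  apply Rmult_le_reg_l with (Ainv ^ 2); [exact HA|].
  rewrite <- Rmult_assoc, Rinv_r, Rmult_1_l by lra. apply Hbound.
Qed.

Lemma coherence_gain_bound m n A Delta delta :
  no_two_rows_parallel m n A -> is_max_coherence m n A Delta ->
  is_min_coherence m n A delta ->
  let D := Rmin (gain delta) (gain Delta) in
  0 <= D /\ forall r s, (r < m)%nat -> (s < m)%nat -> r <> s ->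
    D <= gain (Rabs (dot n (row A r) (row A s))).
Proof.
  intros Hpar [Hmax [j [k [Hj [Hk [Hjk HDelta]]]]]] [Hmin [j' [k' [Hj' [Hk' [Hjk' Hdelta]]]]]] D.
  assert (HD1 : Delta < 1) by (rewrite <- HDelta; now apply Hpar).
  assert (Hd0 : 0 <= delta) by (rewrite <- Hdelta; apply Rabs_pos).
  assert (HdD : delta <= Delta) by (rewrite <- HDelta; now apply Hmin).
  split.
  - apply Rmin_glb; apply gain_nonneg; lra.
  - intros r s Hr Hs Hrs. apply gain_min_endpoints; auto.
Qed.

Theorem theorem1 (m n : nat) (A : nat -> nat -> R) (x b x0 : nat -> R)
  (Ainv Delta delta : R) (k : nat) :
  (m > n)%nat ->
  full_column_rank m n A ->
  standardized m n A ->
  no_two_rows_parallel m n A ->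
  (forall i, (i < m)%nat -> b i = matvec n A x i) ->
  is_inf (inv_norm_set m n A) Ainv ->
  is_max_coherence m n A Delta ->
  is_min_coherence m n A delta ->
  let Rc := frob_sq m n A * Ainv ^ 2 in
  let D := Rmin (delta ^ 2 * (1 - delta) / (1 + delta))
                (Delta ^ 2 * (1 - Delta) / (1 + Delta)) in
  expected_err m n A b x k x0 <=
    ((1 - 1 / Rc) ^ 2 - D / Rc) ^ k * (vnorm n (vsub x x0)) ^ 2.
Proof.
  intros Hmn Hrank Hstd Hpar Hb Hinf Hmax Hmin Rc D.
  assert (Hunit := standardized_unit m n A Hstd).
  (* a unit row forces n >= 1, hence m >= 2 *)
  assert (Hm : (2 <= m)%nat).
  { destruct n; [|lia]. pose proof (Hunit 0%nat ltac:(lia)) as H0. unfold dot in H0; simpl in H0; lra. }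
  destruct (lower_frame_bound m n A Ainv ltac:(lia) Hstd Hrank Hinf) as [HA Hframe].
  destruct (coherence_gain_bound m n A Delta delta Hpar Hmax Hmin) as [HD0 HDgain].
  set (lam := / Ainv ^ 2) in Hframe.
  assert (Hrate : (1 - 1 / Rc) ^ 2 - D / Rc = (1 - lam / INR m) ^ 2 - D * lam / INR m).
  { unfold Rc, lam. rewrite frob_sq_standardized by exact Hstd.
    assert (HM : 2 <= INR m) by (apply (le_INR 2); exact Hm).
    field. split; [intros H0; rewrite H0 in HA; simpl in HA; lra | lra]. }
  pose proof (one_step_contraction m n A b x lam D Hm Hb Hunit Hpar
                (Rinv_0_lt_compat _ HA) Hframe HD0 HDgain) as Hstep.
  rewrite Hrate. apply expected_err_geometric; [exact Hm | | exact Hstep].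
  apply (rate_nonneg m n A b x _ (row A 0) Hm); [rewrite Hunit by lia; lra | exact Hstep].
Qed.
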